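(* For every $n\ge3$, $c>0$ and $x\ge0$ we have $\gamma(x)>\frac95\sqrt{n-1}\,c$. Moreover $k_n>1.999\sqrt{n-1}$ for $5\le n\le 9$, and $k_{10}=6$.
   Context: Definition of $\gamma$: For $n\ge 3$, $c>0$ and $x\ge 0$ put $\alpha(x)=nc+\frac{n}{2(n-1)}x-\frac{n-2}{2(n-1)}\sqrt{x^2+4(n-1)cx}$, $y_n=4(1-n)+\frac{2(n^2-4)}{\sqrt{2n-5}}\cos\!\left(\frac13\arctan\frac{n^2-4n+6}{2(n-1)\sqrt{2n-5}}\right)$, $x_0=y_nc$, $\beta(x)=\alpha(x_0)+\alpha'(x_0)(x-x_0)+\frac12\alpha''(x_0)(x-x_0)^2$, and $\gamma(x)=\alpha(x)$ for $x\ge x_0$, $\gamma(x)=\beta(x)$ for $0\le x<x_0$. Definition of $k_n$: with $\alpha_1(x)=n+\frac{n}{2(n-1)}x-\frac{n-2}{2(n-1)}\sqrt{x^2+4(n-1)x}$, set $k_3=\alpha_1(y_3)-\alpha_1'(y_3)y_3+\frac12\alpha_1''(y_3)y_3^2$ and, for $n\ge4$, $k_n=\alpha_1(y_n)-\frac{\alpha_1'(y_n)^2}{2\alpha_1''(y_n)}$. *)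

From Stdlib Require Import Reals Lra.
Open Scope R_scope.

Definition alpha (n : nat) (c x : R) : R :=
  INR n * c + INR n / (2 * (INR n - 1)) * x
  - (INR n - 2) / (2 * (INR n - 1)) * sqrt (x ^ 2 + 4 * (INR n - 1) * c * x).

(* First derivative of alpha in x (closed form, valid for x > 0). *)
Definition alpha_d1 (n : nat) (c x : R) : R :=
  INR n / (2 * (INR n - 1))
  - (INR n - 2) / (2 * (INR n - 1)) * (x + 2 * (INR n - 1) * c)
      / sqrt (x ^ 2 + 4 * (INR n - 1) * c * x).

(* Second derivative of alpha in x (closed form, valid for x > 0). *)
Definition alpha_d2 (n : nat) (c x : R) : R :=
  2 * (INR n - 2) * (INR n - 1) * c ^ 2
    / (sqrt (x ^ 2 + 4 * (INR n - 1) * c * x)) ^ 3.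

Definition y_n (n : nat) : R :=
  4 * (1 - INR n)
  + 2 * (INR n ^ 2 - 4) / sqrt (2 * INR n - 5)
    * cos (/ 3 * atan ((INR n ^ 2 - 4 * INR n + 6)
                        / (2 * (INR n - 1) * sqrt (2 * INR n - 5)))).

Definition x0 (n : nat) (c : R) : R := y_n n * c.

Definition beta (n : nat) (c x : R) : R :=
  alpha n c (x0 n c) + alpha_d1 n c (x0 n c) * (x - x0 n c)
  + / 2 * alpha_d2 n c (x0 n c) * (x - x0 n c) ^ 2.

Definition gamma (n : nat) (c x : R) : R :=
  if Rle_dec (x0 n c) x then alpha n c x else beta n c x.

Definition k_n (n : nat) : R :=
  if Nat.eqb n 3 then
    alpha 3 1 (y_n 3) - alpha_d1 3 1 (y_n 3) * y_n 3
    + / 2 * alpha_d2 3 1 (y_n 3) * y_n 3 ^ 2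
  else
    alpha n 1 (y_n n) - alpha_d1 n 1 (y_n n) ^ 2 / (2 * alpha_d2 n 1 (y_n n)).

From Stdlib Require Import Reals Lra Lia Psatz.
Open Scope R_scope.

(* Writing x = c (n - 1) (w - 1)^2 / w with w >= 1 rationalises the square root in alpha:
   alpha = c (w + (n - 1) / w), which is at least 2 sqrt (n - 1) c by AM-GM, and alpha', alpha''
   become rational functions of w.  On x >= 0 the parabola beta is at least c k_n: k_n is its
   vertex value for n >= 4, and for n = 3 it is beta (0), beta being increasing there.  Hence
   everything reduces to lower bounds on k_n, a rational function of the w-coordinate w_n of y_n.
   By Viete's formula y_n + 4 (n - 1) is the positive root of an explicit cubic, so sign changes of
   that cubic locate w_n: in [0.9 sqrt (n - 1), 1.25 sqrt (n - 1)] for every n >= 4, in [2, 3]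
   for n = 3, and in tight numerical intervals for 5 <= n <= 9.  For n = 10 the root is rational:
   y_10 = 12, w = 3 and k_10 = 6. *)

Lemma cos_3x t : cos (3 * t) = 4 * cos t ^ 3 - 3 * cos t.
Proof.
  replace (3 * t) with (2 * t + t) by ring.
  rewrite cos_plus, sin_2a, cos_2a_cos.
  pose proof (sin2 t) as Hsin. unfold Rsqr in Hsin.
  replace (2 * sin t * cos t * sin t) with (2 * (sin t * sin t) * cos t) by ring.
  rewrite Hsin. ring.
Qed.

Lemma Rdiv_nonneg a b : 0 <= a -> 0 < b -> 0 <= a / b.
Proof. intros Ha Hb; apply Rmult_le_pos; [exact Ha | apply Rlt_le, Rinv_0_lt_compat, Hb]. Qed.

Definition cubic (B K L z : R) : R := B * z ^ 3 - K * z - L.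

Section PositiveRoot.

Variables B K L : R.
Hypotheses (B_gt0 : 0 < B) (L_gt0 : 0 < L).

Lemma cubic_root_mul z z' : cubic B K L z = 0 ->
  z * cubic B K L z' = (z' - z) * (B * z * z' * (z + z') + L).
Proof.
  intros Hz.
  assert (E : z * cubic B K L z' - z' * cubic B K L z
              = (z' - z) * (B * z * z' * (z + z') + L)) by (unfold cubic; ring).
  rewrite Hz in E; lra.
Qed.

Lemma cubic_root_gt0 z : 0 <= z -> cubic B K L z = 0 -> 0 < z.
Proof.
  intros Hz Hr; destruct (Req_dec z 0) as [->|]; [|lra].
  unfold cubic in Hr; lra.
Qed.

Lemma cubic_neg_lt_root z z' : 0 <= z -> 0 <= z' -> cubic B K L z = 0 ->
  cubic B K L z' < 0 -> z' < z.
Proof.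
  intros Hz Hz' Hr Hneg.
  pose proof (cubic_root_gt0 z Hz Hr).
  pose proof (cubic_root_mul z z' Hr).
  assert (0 <= B * z * z' * (z + z')) by (repeat apply Rmult_le_pos; lra).
  nra.
Qed.

Lemma cubic_pos_gt_root z z' : 0 <= z -> 0 <= z' -> cubic B K L z = 0 ->
  0 < cubic B K L z' -> z < z'.
Proof.
  intros Hz Hz' Hr Hpos.
  pose proof (cubic_root_gt0 z Hz Hr).
  pose proof (cubic_root_mul z z' Hr).
  assert (0 <= B * z * z' * (z + z')) by (repeat apply Rmult_le_pos; lra).
  nra.
Qed.

Lemma cubic_root_unique z z' : 0 <= z -> 0 <= z' ->
  cubic B K L z = 0 -> cubic B K L z' = 0 -> z = z'.
Proof.
  intros Hz Hz' Hr Hr'.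
  pose proof (cubic_root_gt0 z Hz Hr).
  pose proof (cubic_root_mul z z' Hr) as E; rewrite Hr' in E.
  assert (0 <= B * z * z' * (z + z')) by (repeat apply Rmult_le_pos; lra).
  nra.
Qed.

End PositiveRoot.

(* [y_n] is Viete's trigonometric solution of this cubic in [z = y_n + 4 (n - 1)]. *)
Definition yn_cubic (n : nat) : R -> R :=
  cubic (2 * INR n - 5) (3 * (INR n ^ 2 - 4) ^ 2) (4 * (INR n - 1) * (INR n ^ 2 - 4) ^ 2).

Lemma INR_ge3 n : (3 <= n)%nat -> 3 <= INR n.
Proof. intros Hn; apply le_INR in Hn; simpl in Hn; lra. Qed.

Lemma yn_cubic_root n : (3 <= n)%nat ->
  0 <= y_n n + 4 * (INR n - 1) /\ yn_cubic n (y_n n + 4 * (INR n - 1)) = 0.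
Proof.
  intros Hn; pose proof (INR_ge3 n Hn) as HN.
  unfold yn_cubic, cubic, y_n.
  set (N := INR n) in *.
  set (s := sqrt (2 * N - 5)).
  assert (Hs : 0 < s) by (apply sqrt_lt_R0; lra).
  assert (Hss : s * s = 2 * N - 5) by (apply sqrt_sqrt; lra).
  set (P := N ^ 2 - 4).
  assert (HP : 0 < P) by (unfold P; nra).
  set (Q := N ^ 2 - 4 * N + 6).
  set (D := 2 * (N - 1) * s).
  assert (HD : 0 < D) by (unfold D; nra).
  set (a := Q / D).
  assert (Ha : 0 < a) by (unfold a, Q; apply Rdiv_lt_0_compat; nra).
  assert (Hcos_atan : cos (atan a) = D / P).
  { assert (Hsq : sqrt (1 + a²) = P / D).
    { apply sqrt_lem_1.
      - unfold Rsqr; nra.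
      - apply Rlt_le, Rdiv_lt_0_compat; lra.
      - assert (E : P ^ 2 = D ^ 2 + Q ^ 2).
        { unfold D; replace ((2 * (N - 1) * s) ^ 2) with (4 * (N - 1) ^ 2 * (s * s)) by ring.
          rewrite Hss; unfold P, Q; ring. }
        unfold a, Rsqr; field_simplify_eq; [nra | lra]. }
    rewrite cos_atan, Hsq; field; split; lra. }
  pose proof (atan_bound a) as [_ Hbound].
  assert (Hpos : 0 < atan a) by (rewrite <- atan_0; apply atan_increasing; exact Ha).
  set (r := cos (/ 3 * atan a)).
  assert (Hr : 0 <= r) by (apply cos_ge_0; pose proof PI_RGT_0; nra).
  assert (Hr3 : 4 * r ^ 3 * P = 3 * r * P + D).
  { assert (E : 4 * r ^ 3 - 3 * r = D / P).
    { unfold r; rewrite <- cos_3x; replace (3 * (/ 3 * atan a)) with (atan a) by field.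
      exact Hcos_atan. }
    field_simplify_eq in E; lra. }
  replace (4 * (1 - N) + 2 * P / s * r + 4 * (N - 1)) with (2 * P / s * r) by ring.
  split.
  - apply Rmult_le_pos; [apply Rlt_le, Rdiv_lt_0_compat|]; lra.
  - rewrite <- Hss; unfold D in Hr3; field_simplify_eq; [nra | lra].
Qed.

Lemma y_n_pos n : (3 <= n)%nat -> 0 < y_n n.
Proof.
  intros Hn; pose proof (INR_ge3 n Hn) as HN.
  destruct (yn_cubic_root n Hn) as [Hz Hr].
  set (m := INR n - 1) in *.
  assert (Hm : 2 <= m) by (unfold m; lra).
  assert (HL : 0 < 4 * m * (INR n ^ 2 - 4) ^ 2).
  { apply Rmult_lt_0_compat; [lra | apply pow_lt; nra]. }
  assert (Hlo : yn_cubic n (4 * m) < 0).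
  { unfold yn_cubic, cubic; fold m.
    replace (INR n) with (m + 1) by (unfold m; ring).
    (* (m + 3)^2 (m - 1)^2 - 4 (2 m - 3) m^2 = (m^2 - 2 m)^2 + 6 (m - 1)^2 + 3 *)
    assert (0 < m * ((m ^ 2 - 2 * m) ^ 2 + 6 * (m - 1) ^ 2 + 3)) by (apply Rmult_lt_0_compat; nra).
    nra. }
  assert (4 * m < y_n n + 4 * m)
    by (eapply cubic_neg_lt_root; [| exact HL | exact Hz | | exact Hr | exact Hlo]; lra).
  lra.
Qed.

Lemma sqrt_disc_scale n c y : 0 < c ->
  sqrt ((y * c) ^ 2 + 4 * (INR n - 1) * c * (y * c))
  = c * sqrt (y ^ 2 + 4 * (INR n - 1) * 1 * y).
Proof.
  intros Hc.
  replace ((y * c) ^ 2 + 4 * (INR n - 1) * c * (y * c))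
    with (c ^ 2 * (y ^ 2 + 4 * (INR n - 1) * 1 * y)) by ring.
  rewrite sqrt_mult_alt, sqrt_pow2; [reflexivity | lra | apply pow2_ge_0].
Qed.

Lemma alpha_scale n c y : 0 < c -> alpha n c (y * c) = c * alpha n 1 y.
Proof. intros Hc; unfold alpha; rewrite sqrt_disc_scale by exact Hc; ring. Qed.

Lemma alpha_d1_scale n c y : 0 < c -> alpha_d1 n c (y * c) = alpha_d1 n 1 y.
Proof.
  intros Hc; unfold alpha_d1; rewrite sqrt_disc_scale by exact Hc.
  set (a := (INR n - 2) / (2 * (INR n - 1))).
  replace (a * (y * c + 2 * (INR n - 1) * c))
    with (a * (y + 2 * (INR n - 1) * 1) * c) by ring.
  rewrite Rdiv_mult_r_l by lra; reflexivity.
Qed.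

Lemma alpha_d2_scale n c y : 0 < c -> alpha_d2 n c (y * c) = alpha_d2 n 1 y / c.
Proof.
  intros Hc; unfold alpha_d2, Rdiv; rewrite sqrt_disc_scale by exact Hc.
  rewrite Rpow_mult_distr, Rinv_mult.
  set (X := / sqrt _ ^ 3).
  assert (Hc3 : c ^ 2 * / c ^ 3 = / c) by (field; lra).
  transitivity (2 * (INR n - 2) * (INR n - 1) * (c ^ 2 * / c ^ 3) * X); [ring|].
  rewrite Hc3; ring.
Qed.

Lemma beta_scale n c x : 0 < c -> beta n c x = c * beta n 1 (x / c).
Proof.
  intros Hc; unfold beta, x0.
  rewrite alpha_scale, alpha_d1_scale, alpha_d2_scale by exact Hc.
  rewrite !Rmult_1_r; field; lra.
Qed.

Lemma sqrt_disc_w m w : 0 <= m -> 1 <= w ->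
  sqrt ((m * (w - 1) ^ 2 / w) ^ 2 + 4 * m * 1 * (m * (w - 1) ^ 2 / w)) = m * (w ^ 2 - 1) / w.
Proof.
  intros Hm Hw; apply sqrt_lem_1.
  - assert (0 <= m * (w - 1) ^ 2 / w)
      by (apply Rdiv_nonneg; [apply Rmult_le_pos; [lra | apply pow2_ge_0] | lra]).
    nra.
  - apply Rdiv_nonneg; [apply Rmult_le_pos; nra | lra].
  - field; lra.
Qed.

Section WCoordinate.

Variable n : nat.
Hypothesis n_ge2 : 2 <= INR n.

Lemma alpha_w w : 1 <= w ->
  alpha n 1 ((INR n - 1) * (w - 1) ^ 2 / w) = w + (INR n - 1) / w.
Proof.
  intros Hw; unfold alpha; rewrite sqrt_disc_w by lra.
  field; lra.
Qed.

Lemma alpha_d1_w w : 1 < w ->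
  alpha_d1 n 1 ((INR n - 1) * (w - 1) ^ 2 / w)
  = (w ^ 2 - (INR n - 1)) / ((INR n - 1) * (w ^ 2 - 1)).
Proof.
  intros Hw; unfold alpha_d1; rewrite sqrt_disc_w by lra.
  field; repeat split; nra.
Qed.

Lemma alpha_d2_w w : 1 < w ->
  alpha_d2 n 1 ((INR n - 1) * (w - 1) ^ 2 / w)
  = 2 * (INR n - 2) * w ^ 3 / ((INR n - 1) ^ 2 * (w ^ 2 - 1) ^ 3).
Proof.
  intros Hw; unfold alpha_d2; rewrite sqrt_disc_w by lra.
  field; repeat split; nra.
Qed.

End WCoordinate.

Lemma exists_w m y : 0 < m -> 0 < y -> exists w, 1 < w /\ y = m * (w - 1) ^ 2 / w.
Proof.
  intros Hm Hy.
  set (S := sqrt (y ^ 2 + 4 * m * y)).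
  assert (HS : 0 < S) by (apply sqrt_lt_R0; nra).
  assert (HSS : S * S = y ^ 2 + 4 * m * y) by (apply sqrt_sqrt; nra).
  set (w := (y + 2 * m + S) / (2 * m)).
  assert (Hw : 1 < w) by (apply (Rmult_lt_reg_r (2 * m)); [lra|]; unfold w; field_simplify; lra).
  assert (Hyw : y * w = m * (w - 1) ^ 2) by (unfold w; field_simplify_eq; [nra | lra]).
  exists w; split; [exact Hw|].
  rewrite <- Hyw; field; lra.
Qed.

Lemma am_gm_w m w : 0 <= m -> 0 < w -> 2 * sqrt m <= w + m / w.
Proof.
  intros Hm Hw.
  assert (E : w + sqrt m * sqrt m / w - 2 * sqrt m = (w - sqrt m) ^ 2 / w) by (field; lra).
  rewrite sqrt_sqrt in E by exact Hm.
  assert (0 <= (w - sqrt m) ^ 2 / w)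
    by (apply Rdiv_nonneg; [apply pow2_ge_0 | lra]).
  lra.
Qed.

Lemma sqrt_le_of_le_sqr m q : 0 <= q -> m <= q * q -> sqrt m <= q.
Proof. intros Hq Hm; rewrite <- (sqrt_square q Hq); apply sqrt_le_1_alt, Hm. Qed.

Lemma alpha1_ge n y : 2 <= INR n -> 0 <= y -> 2 * sqrt (INR n - 1) <= alpha n 1 y.
Proof.
  intros Hn Hy.
  destruct (Req_dec y 0) as [->|Hy0].
  - replace 0 with ((INR n - 1) * (1 - 1) ^ 2 / 1) by field.
    rewrite alpha_w by lra; apply am_gm_w; lra.
  - destruct (exists_w (INR n - 1) y) as [w [Hw ->]]; [lra | lra |].
    rewrite alpha_w by lra; apply am_gm_w; lra.
Qed.

Lemma alpha_ge n c x : 2 <= INR n -> 0 < c -> 0 <= x ->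
  2 * sqrt (INR n - 1) * c <= alpha n c x.
Proof.
  intros Hn Hc Hx.
  replace x with (x / c * c) by (field; lra).
  rewrite alpha_scale by exact Hc.
  assert (Hxc : 0 <= x / c) by (apply Rdiv_nonneg; lra).
  pose proof (alpha1_ge n (x / c) Hn Hxc); nra.
Qed.

Definition yn_cubic_w (N w : R) : R :=
  (2 * N - 5) * (N - 1) ^ 2 * (w + 1) ^ 6 - (N ^ 2 - 4) ^ 2 * (3 * (w + 1) ^ 2 * w ^ 2 + 4 * w ^ 3).

Lemma yn_cubic_at_w n w : 0 < w ->
  yn_cubic n ((INR n - 1) * (w + 1) ^ 2 / w) = (INR n - 1) * yn_cubic_w (INR n) w / w ^ 3.
Proof. intros Hw; unfold yn_cubic, cubic, yn_cubic_w; field; lra. Qed.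

Lemma lt_of_succ_sqr_div_lt a b : 1 <= a -> 1 <= b -> (a + 1) ^ 2 / a < (b + 1) ^ 2 / b -> a < b.
Proof.
  intros Ha Hb Hlt.
  destruct (Rlt_or_le a b) as [|Hba]; [assumption | exfalso].
  assert (E : (b + 1) ^ 2 / b - (a + 1) ^ 2 / a = - ((a - b) * (a * b - 1) / (a * b)))
    by (field; lra).
  assert (0 <= (a - b) * (a * b - 1) / (a * b))
    by (apply Rdiv_nonneg; [apply Rmult_le_pos; nra | nra]).
  lra.
Qed.

Lemma y_n_w_bracket n wl wh : (3 <= n)%nat -> 1 < wl -> wl < wh ->
  yn_cubic_w (INR n) wl < 0 -> 0 < yn_cubic_w (INR n) wh ->
  exists w, wl < w < wh /\ y_n n = (INR n - 1) * (w - 1) ^ 2 / w.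
Proof.
  intros Hn Hwl Hwh Hlo Hhi; pose proof (INR_ge3 n Hn) as HN.
  destruct (yn_cubic_root n Hn) as [Hz Hr].
  destruct (exists_w (INR n - 1) (y_n n)) as [w [Hw Hy]]; [lra | exact (y_n_pos n Hn) |].
  exists w; split; [|exact Hy].
  set (m := INR n - 1) in *.
  assert (Hm : 2 <= m) by (unfold m; lra).
  assert (HB : 0 < 2 * INR n - 5) by lra.
  assert (HL : 0 < 4 * m * (INR n ^ 2 - 4) ^ 2)
    by (apply Rmult_lt_0_compat; [lra | apply pow_lt; nra]).
  assert (Ez : y_n n + 4 * m = m * (w + 1) ^ 2 / w) by (rewrite Hy; field; lra).
  rewrite Ez in Hz, Hr.
  assert (Hl : m * (wl + 1) ^ 2 / wl < m * (w + 1) ^ 2 / w).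
  { apply (cubic_neg_lt_root _ (3 * (INR n ^ 2 - 4) ^ 2) _ HB HL); [lra | | exact Hr |].
    - apply Rdiv_nonneg; [apply Rmult_le_pos; [lra | apply pow2_ge_0] | lra].
    - change (yn_cubic n (m * (wl + 1) ^ 2 / wl) < 0); unfold m; rewrite yn_cubic_at_w by lra.
      apply Rdiv_neg_pos; [apply Rmult_pos_neg; lra | apply pow_lt; lra]. }
  assert (Hh : m * (w + 1) ^ 2 / w < m * (wh + 1) ^ 2 / wh).
  { apply (cubic_pos_gt_root _ (3 * (INR n ^ 2 - 4) ^ 2) _ HB HL); [lra | | exact Hr |].
    - apply Rdiv_nonneg; [apply Rmult_le_pos; [lra | apply pow2_ge_0] | lra].
    - change (0 < yn_cubic n (m * (wh + 1) ^ 2 / wh)); unfold m; rewrite yn_cubic_at_w by lra.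
      apply Rdiv_lt_0_compat; [apply Rmult_lt_0_compat; lra | apply pow_lt; lra]. }
  unfold Rdiv in Hl, Hh; rewrite !Rmult_assoc in Hl, Hh.
  apply Rmult_lt_reg_l in Hl, Hh; try lra.
  split; apply lt_of_succ_sqr_div_lt; lra.
Qed.

Lemma quadratic_ge_vertex A D E s : 0 < E -> A - D ^ 2 / (2 * E) <= A + D * s + / 2 * E * s ^ 2.
Proof.
  intros HE.
  assert (Eq : A + D * s + / 2 * E * s ^ 2 - (A - D ^ 2 / (2 * E)) = (E * s + D) ^ 2 / (2 * E))
    by (field; lra).
  assert (0 <= (E * s + D) ^ 2 / (2 * E))
    by (apply Rdiv_nonneg; [apply pow2_ge_0 | lra]).
  lra.
Qed.

Lemma quadratic_ge_at_0 A D E y t : 0 <= E -> E * y <= D -> 0 <= t ->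
  A - D * y + / 2 * E * y ^ 2 <= A + D * (t - y) + / 2 * E * (t - y) ^ 2.
Proof. intros HE HD Ht; nra. Qed.

Lemma alpha_d2_pos n y : (3 <= n)%nat -> 0 < y -> 0 < alpha_d2 n 1 y.
Proof.
  intros Hn Hy; pose proof (INR_ge3 n Hn) as HN.
  unfold alpha_d2; apply Rdiv_lt_0_compat.
  - assert (0 < (INR n - 2) * (INR n - 1)) by nra; nra.
  - apply pow_lt, sqrt_lt_R0; nra.
Qed.

Lemma y_n_3_w : exists w, 2 < w < 3 /\ y_n 3 = 2 * (w - 1) ^ 2 / w.
Proof.
  assert (E : INR 3 = 3) by (simpl; lra).
  assert (Hlo : yn_cubic_w (INR 3) 2 < 0) by (unfold yn_cubic_w; rewrite E; lra).
  assert (Hhi : 0 < yn_cubic_w (INR 3) 3) by (unfold yn_cubic_w; rewrite E; lra).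
  destruct (y_n_w_bracket 3 2 3 ltac:(lia) ltac:(lra) ltac:(lra) Hlo Hhi) as [w [Hw Hy]].
  exists w; split; [exact Hw|]; rewrite Hy, E; field; lra.
Qed.

Lemma alpha_slope_3 : alpha_d2 3 1 (y_n 3) * y_n 3 <= alpha_d1 3 1 (y_n 3).
Proof.
  assert (E : INR 3 = 3) by (simpl; lra).
  destruct y_n_3_w as [w [Hw Hy]].
  replace (y_n 3) with ((INR 3 - 1) * (w - 1) ^ 2 / w) by (rewrite Hy, E; field; lra).
  rewrite alpha_d1_w, alpha_d2_w by (rewrite ?E; lra).
  rewrite E.
  assert (Hw1 : 0 < w ^ 2 - 1) by nra.
  assert (Hw3 : 0 < (w + 1) ^ 3) by (apply pow_lt; lra).
  assert (Eq : (w ^ 2 - (3 - 1)) / ((3 - 1) * (w ^ 2 - 1))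
               - 2 * (3 - 2) * w ^ 3 / ((3 - 1) ^ 2 * (w ^ 2 - 1) ^ 3) * ((3 - 1) * (w - 1) ^ 2 / w)
               = ((w ^ 2 - 2) * (w + 1) ^ 2 - 2 * w ^ 2) / (2 * (w - 1) * (w + 1) ^ 3))
    by (field; repeat split; nra).
  assert (0 <= ((w ^ 2 - 2) * (w + 1) ^ 2 - 2 * w ^ 2) / (2 * (w - 1) * (w + 1) ^ 3))
    by (apply Rdiv_nonneg; nra).
  lra.
Qed.

Lemma beta1_ge_k_n n t : (3 <= n)%nat -> 0 <= t -> k_n n <= beta n 1 t.
Proof.
  intros Hn Ht; unfold beta, x0; rewrite Rmult_1_r.
  destruct (Nat.eq_dec n 3) as [->|Hn3].
  - unfold k_n; simpl Nat.eqb; cbv iota.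
    apply quadratic_ge_at_0; [| exact alpha_slope_3 | exact Ht].
    apply Rlt_le, alpha_d2_pos; [lia | exact (y_n_pos 3 ltac:(lia))].
  - unfold k_n; replace (Nat.eqb n 3) with false by (symmetry; apply Nat.eqb_neq; exact Hn3).
    apply quadratic_ge_vertex, alpha_d2_pos; [exact Hn | exact (y_n_pos n Hn)].
Qed.

Lemma beta_ge_k_n n c x : (3 <= n)%nat -> 0 < c -> 0 <= x -> c * k_n n <= beta n c x.
Proof.
  intros Hn Hc Hx; rewrite beta_scale by exact Hc.
  apply Rmult_le_compat_l; [lra|].
  apply beta1_ge_k_n; [exact Hn | apply Rdiv_nonneg; lra].
Qed.

Definition k_of_w (m w : R) : R :=
  w + m / w - (w ^ 2 - m) ^ 2 * (w ^ 2 - 1) / (4 * (m - 1) * w ^ 3).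

Lemma k_n_w n w : (4 <= n)%nat -> 1 < w -> y_n n = (INR n - 1) * (w - 1) ^ 2 / w ->
  k_n n = k_of_w (INR n - 1) w.
Proof.
  intros Hn Hw Hy.
  assert (HN : 4 <= INR n) by (apply le_INR in Hn; simpl in Hn; lra).
  unfold k_n; replace (Nat.eqb n 3) with false by (symmetry; apply Nat.eqb_neq; lia).
  rewrite Hy, alpha_w, alpha_d1_w, alpha_d2_w by lra.
  unfold k_of_w; field; repeat split; nra.
Qed.

Lemma k_of_w_gt u w : 3 <= u * u -> 0 <= u -> 9 / 10 * u <= w <= 5 / 4 * u ->
  9 / 5 * u < k_of_w (u * u) w.
Proof.
  intros Hm Hu [Hlo Hhi].
  assert (Hu17 : 17 / 10 <= u) by nra.
  assert (Hw : 0 < w) by lra.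
  set (m := u * u) in *.
  (* For m >= 3 the subtracted term is at most 3 (w^2 - m)^2 / (8 m w); in t = w / u the
     remaining bound is a quartic inequality on [9/10, 5/4]. *)
  assert (Hk : 3 * (w ^ 2 - m) ^ 2 / (8 * m * w)
               - (w ^ 2 - m) ^ 2 * (w ^ 2 - 1) / (4 * (m - 1) * w ^ 3)
               = (w ^ 2 - m) ^ 2 * ((m - 3) * w ^ 2 + 2 * m) / (8 * m * (m - 1) * w ^ 3))
    by (field; repeat split; lra).
  assert (0 <= (w ^ 2 - m) ^ 2 * ((m - 3) * w ^ 2 + 2 * m) / (8 * m * (m - 1) * w ^ 3)).
  { assert (0 <= w ^ 2) by apply pow2_ge_0.
    assert (0 < w ^ 3) by (apply pow_lt; lra).
    apply Rdiv_nonneg; [apply Rmult_le_pos; [apply pow2_ge_0 | nra] |].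
    repeat apply Rmult_lt_0_compat; lra. }
  set (t := w / u).
  assert (Hwt : w = t * u) by (unfold t; field; lra).
  assert (Ht : 9 / 10 <= t <= 5 / 4).
  { rewrite Hwt in Hlo, Hhi; split; nra. }
  assert (Hp : 0 < 8 * t ^ 2 + 8 - 3 * (t ^ 2 - 1) ^ 2 - 72 / 5 * t).
  { assert (0 <= (t - 9 / 10) * (5 / 4 - t)) by nra.
    assert (0 <= (t - 9 / 10) * (5 / 4 - t) * t) by nra.
    assert (0 <= (t - 9 / 10) * (5 / 4 - t) * t * t) by nra.
    nra. }
  assert (Ek : w + m / w - 3 * (w ^ 2 - m) ^ 2 / (8 * m * w) - 9 / 5 * u
               = u * (8 * t ^ 2 + 8 - 3 * (t ^ 2 - 1) ^ 2 - 72 / 5 * t) / (8 * t))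
    by (unfold m; rewrite Hwt; field; split; lra).
  assert (0 < u * (8 * t ^ 2 + 8 - 3 * (t ^ 2 - 1) ^ 2 - 72 / 5 * t) / (8 * t))
    by (apply Rdiv_lt_0_compat; [apply Rmult_lt_0_compat |]; lra).
  unfold k_of_w; lra.
Qed.

(* Taylor expansions at [u = 17/10]: all coefficients are positive. *)
Lemma yn_cubic_w_hi u : 17 / 10 <= u -> 0 < yn_cubic_w (u * u + 1) (5 / 4 * u).
Proof.
  intros Hu; set (t := u - 17 / 10); assert (Ht : 0 <= t) by (unfold t; lra).
  replace u with (17 / 10 + t) by (unfold t; ring).
  match goal with |- 0 < ?X => replace X with
     ((1551143312650027/3276800000000) + t * ((36758357729697/2560000000)
      + t * ((576745521086041/8192000000) + t * ((27386562622979/163840000)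
      + t * ((15573322307911/65536000) + t * ((451429469337/2048000)
      + t * ((28441379321/204800) + t * ((2467508773/40960)
      + t * ((584093265/32768) + t * ((3547325/1024)
      + t * ((830675/2048) + t * ((23875/1024)
      + t * ((625/2048))))))))))))))
      by (unfold yn_cubic_w; field) end.
  apply Rplus_lt_le_0_compat; [lra|].
  repeat (apply Rmult_le_pos; [exact Ht|]; apply Rplus_le_le_0_compat; [lra|]).
  apply Rmult_le_pos; lra.
Qed.

Lemma yn_cubic_w_lo u : 17 / 10 <= u -> yn_cubic_w (u * u + 1) (9 / 10 * u) < 0.
Proof.
  intros Hu; set (t := u - 17 / 10); assert (Ht : 0 <= t) by (unfold t; lra).
  replace u with (17 / 10 + t) by (unfold t; ring).
  apply Ropp_lt_cancel; rewrite Ropp_0.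
  match goal with |- 0 < ?X => replace X with
     ((628343776897460423699/500000000000000000) + t * ((19817308555458858279/3125000000000000)
      + t * ((2345367884509623633/156250000000000) + t * ((546000304576843753/25000000000000)
      + t * ((228168759783976731/10000000000000) + t * ((5988247375163109/312500000000)
      + t * ((836186873837113/62500000000) + t * ((46425910767687/6250000000)
      + t * ((3069856550061/1000000000) + t * ((2779220889/3125000)
      + t * ((1054568727/6250000) + t * ((23343309/1250000)
      + t * ((452709/500000))))))))))))))
      by (unfold yn_cubic_w; field) end.
  apply Rplus_lt_le_0_compat; [lra|].
  repeat (apply Rmult_le_pos; [exact Ht|]; apply Rplus_le_le_0_compat; [lra|]).
  apply Rmult_le_pos; lra.
Qed.

Lemma k_n_gt_ge4 n : (4 <= n)%nat -> 9 / 5 * sqrt (INR n - 1) < k_n n.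
Proof.
  intros Hn.
  assert (HN : 4 <= INR n) by (apply le_INR in Hn; simpl in Hn; lra).
  set (u := sqrt (INR n - 1)).
  assert (Hu : 0 <= u) by apply sqrt_pos.
  assert (Huu : u * u = INR n - 1) by (apply sqrt_sqrt; lra).
  assert (Hu17 : 17 / 10 <= u) by nra.
  assert (EN : INR n = u * u + 1) by lra.
  assert (Hlo : yn_cubic_w (INR n) (9 / 10 * u) < 0) by (rewrite EN; apply yn_cubic_w_lo; lra).
  assert (Hhi : 0 < yn_cubic_w (INR n) (5 / 4 * u)) by (rewrite EN; apply yn_cubic_w_hi; lra).
  destruct (y_n_w_bracket n (9 / 10 * u) (5 / 4 * u) ltac:(lia) ltac:(lra) ltac:(lra) Hlo Hhi)
    as [w [Hw Hy]].
  rewrite (k_n_w n w Hn ltac:(lra) Hy), <- Huu.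
  apply k_of_w_gt; lra.
Qed.

Lemma k_n_3_gt : 9 / 5 * sqrt (INR 3 - 1) < k_n 3.
Proof.
  assert (E : INR 3 = 3) by (simpl; lra).
  destruct y_n_3_w as [w [Hw Hy]].
  unfold k_n; simpl Nat.eqb; cbv iota.
  replace (y_n 3) with ((INR 3 - 1) * (w - 1) ^ 2 / w) by (rewrite Hy, E; field; lra).
  rewrite alpha_w, alpha_d1_w, alpha_d2_w by (rewrite ?E; lra).
  rewrite E.
  assert (Hs : sqrt (3 - 1) <= 141422 / 100000) by (apply sqrt_le_of_le_sqr; lra).
  assert (Hw3 : 0 < (w + 1) ^ 3) by (apply pow_lt; lra).
  assert (Eq : w + (3 - 1) / w
               - (w ^ 2 - (3 - 1)) / ((3 - 1) * (w ^ 2 - 1)) * ((3 - 1) * (w - 1) ^ 2 / w)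
               + / 2 * (2 * (3 - 2) * w ^ 3 / ((3 - 1) ^ 2 * (w ^ 2 - 1) ^ 3))
                 * ((3 - 1) * (w - 1) ^ 2 / w) ^ 2
               - 9 / 5 * (141422 / 100000)
               = ((w ^ 2 + 2) * (w + 1) ^ 3 - (w ^ 2 - 2) * (w - 1) * (w + 1) ^ 2 + w ^ 2 * (w - 1)
                  - 9 / 5 * (141422 / 100000) * w * (w + 1) ^ 3) / (w * (w + 1) ^ 3))
    by (field; repeat split; nra).
  assert (0 < ((w ^ 2 + 2) * (w + 1) ^ 3 - (w ^ 2 - 2) * (w - 1) * (w + 1) ^ 2 + w ^ 2 * (w - 1)
               - 9 / 5 * (141422 / 100000) * w * (w + 1) ^ 3) / (w * (w + 1) ^ 3)).
  { apply Rdiv_lt_0_compat; [| nra].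
    assert (0 <= (w - 2) * (3 - w)) by nra; nra. }
  lra.
Qed.

Lemma k_n_gt n : (3 <= n)%nat -> 9 / 5 * sqrt (INR n - 1) < k_n n.
Proof.
  intros Hn; destruct (Nat.eq_dec n 3) as [->|Hn3].
  - exact k_n_3_gt.
  - apply k_n_gt_ge4; lia.
Qed.

Lemma k_of_w_ge_bracket m w wl wh : 1 < m -> 1 <= wl -> m <= wl * wl -> wl <= w <= wh ->
  wl + m / wl - (wh ^ 2 - m) ^ 2 * (wh ^ 2 - 1) / (4 * (m - 1) * wl ^ 3) <= k_of_w m w.
Proof.
  intros Hm Hwl Hmwl [Hlo Hhi]; unfold k_of_w.
  assert (Hinc : 0 <= (w - wl) * (w * wl - m) / (w * wl))
    by (apply Rdiv_nonneg; [apply Rmult_le_pos; nra | nra]).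
  assert (Einc : w + m / w - (wl + m / wl) = (w - wl) * (w * wl - m) / (w * wl)) by (field; lra).
  assert (Hnum : (w ^ 2 - m) ^ 2 * (w ^ 2 - 1) <= (wh ^ 2 - m) ^ 2 * (wh ^ 2 - 1)).
  { assert (0 <= w ^ 2 - m) by nra.
    assert (w ^ 2 - m <= wh ^ 2 - m) by nra.
    apply Rmult_le_compat; [apply pow2_ge_0 | nra | apply pow_incr | ]; nra. }
  assert (Hden : 0 < 4 * (m - 1) * wl ^ 3) by (assert (0 < wl ^ 3) by (apply pow_lt; lra); nra).
  assert (Hden' : 4 * (m - 1) * wl ^ 3 <= 4 * (m - 1) * w ^ 3)
    by (apply Rmult_le_compat_l; [lra | apply pow_incr; lra]).
  assert ((w ^ 2 - m) ^ 2 * (w ^ 2 - 1) / (4 * (m - 1) * w ^ 3)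
          <= (wh ^ 2 - m) ^ 2 * (wh ^ 2 - 1) / (4 * (m - 1) * wl ^ 3)).
  { apply Rmult_le_compat; [apply Rmult_le_pos; [apply pow2_ge_0 | nra] | | exact Hnum |].
    - apply Rlt_le, Rinv_0_lt_compat; lra.
    - apply Rinv_le_contravar; lra. }
  lra.
Qed.

Lemma k_n_gt_of_bracket n wl wh q r : (4 <= n)%nat -> 1 < wl -> wl < wh ->
  yn_cubic_w (INR n) wl < 0 -> 0 < yn_cubic_w (INR n) wh ->
  INR n - 1 <= wl * wl -> 0 <= q -> INR n - 1 <= q * q -> 0 <= r ->
  r * q < wl + (INR n - 1) / wl
          - (wh ^ 2 - (INR n - 1)) ^ 2 * (wh ^ 2 - 1) / (4 * (INR n - 1 - 1) * wl ^ 3) ->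
  r * sqrt (INR n - 1) < k_n n.
Proof.
  intros Hn Hwl Hwh Hlo Hhi Hmwl Hq Hmq Hr Hbound.
  assert (HN : 4 <= INR n) by (apply le_INR in Hn; simpl in Hn; lra).
  destruct (y_n_w_bracket n wl wh ltac:(lia) Hwl Hwh Hlo Hhi) as [w [Hw Hy]].
  rewrite (k_n_w n w Hn ltac:(lra) Hy).
  pose proof (k_of_w_ge_bracket (INR n - 1) w wl wh ltac:(lra) ltac:(lra) Hmwl ltac:(lra)).
  pose proof (sqrt_le_of_le_sqr (INR n - 1) q Hq Hmq).
  assert (r * sqrt (INR n - 1) <= r * q) by (apply Rmult_le_compat_l; lra).
  lra.
Qed.

Lemma k_n_gt_1999 n : (5 <= n <= 9)%nat -> 1999 / 1000 * sqrt (INR n - 1) < k_n n.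
Proof.
  intros Hn.
  assert (Hcases : (n = 5 \/ n = 6 \/ n = 7 \/ n = 8 \/ n = 9)%nat) by lia.
  (* [wl < w_n < wh] and [q] rounds [sqrt (n - 1)] up. *)
  destruct Hcases as [-> | [-> | [-> | [-> | ->]]]];
    [ apply (k_n_gt_of_bracket 5 (4303971/2000000) (1344991/625000) 2)
    | apply (k_n_gt_of_bracket 6 (23093073/10000000) (11546537/5000000) (2236068/1000000))
    | apply (k_n_gt_of_bracket 7 (24826129/10000000) (2482613/1000000) (2449490/1000000))
    | apply (k_n_gt_of_bracket 8 (26580641/10000000) (13290321/5000000) (2645752/1000000))
    | apply (k_n_gt_of_bracket 9 (28310709/10000000) (2831071/1000000) (2828428/1000000)) ];
    try lia; unfold yn_cubic_w; simpl INR; lra.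
Qed.

Lemma y_n_10 : y_n 10 = 12.
Proof.
  assert (E : INR 10 = 10) by (simpl; lra).
  destruct (yn_cubic_root 10 ltac:(lia)) as [Hz Hr].
  unfold yn_cubic in Hr; rewrite E in Hz, Hr.
  assert (H48 : cubic (2 * 10 - 5) (3 * (10 ^ 2 - 4) ^ 2) (4 * (10 - 1) * (10 ^ 2 - 4) ^ 2) 48 = 0)
    by (unfold cubic; lra).
  pose proof (cubic_root_unique (2 * 10 - 5) _ (4 * (10 - 1) * (10 ^ 2 - 4) ^ 2)
                ltac:(lra) ltac:(lra) _ 48 Hz ltac:(lra) Hr H48); lra.
Qed.

Lemma k_n_10 : k_n 10 = 6.
Proof.
  assert (E : INR 10 = 10) by (simpl; lra).
  rewrite (k_n_w 10 3); [unfold k_of_w; rewrite E; field | lia | lra |].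
  rewrite y_n_10, E; field.
Qed.

Theorem mainTheorem9 :
  (forall (n : nat) (c x : R), (3 <= n)%nat -> 0 < c -> 0 <= x ->
     gamma n c x > 9 / 5 * sqrt (INR n - 1) * c)
  /\ (forall n : nat, (5 <= n <= 9)%nat -> k_n n > 1999 / 1000 * sqrt (INR n - 1))
  /\ k_n 10 = 6.
Proof.
  split; [| split; [exact k_n_gt_1999 | exact k_n_10]].
  intros n c x Hn Hc Hx.
  pose proof (INR_ge3 n Hn) as HN.
  assert (Hu : 0 < sqrt (INR n - 1) * c) by (apply Rmult_lt_0_compat; [apply sqrt_lt_R0|]; lra).
  unfold gamma; destruct (Rle_dec (x0 n c) x).
  - pose proof (alpha_ge n c x ltac:(lra) Hc Hx); lra.
  - pose proof (beta_ge_k_n n c x Hn Hc Hx).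
    pose proof (Rmult_lt_compat_r c _ _ Hc (k_n_gt n Hn)); lra.
Qed.
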